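(* Let $(!, \delta, \varepsilon, \mathsf{m}, \mathsf{m}_K)$ be a symmetric monoidal comonad on a symmetric monoidal category $(\mathbb{X}, \otimes, K)$. Then the following are in bijective correspondence: (1) Cocommutative bimonoids in $(\mathbb{X}^!, \otimes^\mathsf{m}, (K, \mathsf{m}_K))$; (2) Cocommutative bimonoids $(A, \nabla, \mathsf{u}, \Delta, \mathsf{e})$ in $(\mathbb{X}, \otimes, K)$ equipped with a natural transformation $\lambda_X: A \otimes !(X) \to !(A \otimes X)$ such that $\lambda$ is a symmetric monoidal mixed distributive law of the symmetric comonoidal monad $(A \otimes -, \mu^\nabla, \eta^\mathsf{u}, \mathsf{n}^\Delta, \mathsf{n}^\mathsf{e}_K)$ over $(!, \delta, \varepsilon, \mathsf{m}, \mathsf{m}_K)$ and $\alpha_{A,!(X),!(Y)};(\lambda_X\otimes 1_{!(Y)});\mathsf{m}_{A\otimes X,Y} = (1_A\otimes \mathsf{m}_{X,Y});\lambda_{X\otimes Y};!(\alpha_{A,X,Y})$ as maps $A\otimes(!(X)\otimes !(Y))\to !((A\otimes X)\otimes Y)$.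
   Context: Composition is in diagrammatic order ($f;g$ = first $f$ then $g$); $\alpha,\ell,\rho,\sigma$ are the associator, left/right unitors and symmetry, and $\tau_{A,B,C,D}:(A\otimes B)\otimes(C\otimes D)\to(A\otimes C)\otimes(B\otimes D)$ is the canonical interchange isomorphism. A symmetric monoidal comonad $(!,\delta,\varepsilon,\mathsf{m},\mathsf{m}_K)$ is a comonad with symmetric lax monoidal structure $\mathsf{m}_{A,B}:!(A)\otimes!(B)\to!(A\otimes B)$, $\mathsf{m}_K:K\to!(K)$ for which $\delta,\varepsilon$ are monoidal; its Eilenberg-Moore category $\mathbb{X}^!$ of $!$-coalgebras is symmetric monoidal with $(A,\omega)\otimes^\mathsf{m}(B,\omega')=(A\otimes B,(\omega\otimes\omega');\mathsf{m}_{A,B})$ and unit $(K,\mathsf{m}_K)$. For a cocommutative bimonoid $(A,\nabla,\mathsf{u},\Delta,\mathsf{e})$ the symmetric comonoidal monad $A\otimes-$ has $\mu^\nabla_X=\alpha_{A,A,X};(\nabla\otimes 1_X)$, $\eta^\mathsf{u}_X=\ell^{-1}_X;(\mathsf{u}\otimes 1_X)$, $\mathsf{n}^\Delta_{X,Y}=(\Delta\otimes 1_{X\otimes Y});\tau_{A,A,X,Y}$, $\mathsf{n}^\mathsf{e}_K=\rho_A;\mathsf{e}$. A mixed distributive law of a monad $(\mathsf{T},\mu,\eta)$ over $(!,\delta,\varepsilon)$ is a natural $\lambda_X:\mathsf{T}!(X)\to!\mathsf{T}(X)$ with $\mu_{!(X)};\lambda_X=\mathsf{T}(\lambda_X);\lambda_{\mathsf{T}(X)};!(\mu_X)$,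 $\eta_{!(X)};\lambda_X=!(\eta_X)$, $\mathsf{T}(\delta_X);\lambda_{!(X)};!(\lambda_X)=\lambda_X;\delta_{\mathsf{T}(X)}$, $\lambda_X;\varepsilon_{\mathsf{T}(X)}=\mathsf{T}(\varepsilon_X)$; for a symmetric comonoidal monad $(\mathsf{T},\mu,\eta,\mathsf{n},\mathsf{n}_K)$ it is symmetric monoidal if also $\mathsf{n}_{!(X),!(Y)};(\lambda_X\otimes\lambda_Y);\mathsf{m}_{\mathsf{T}(X),\mathsf{T}(Y)}=\mathsf{T}(\mathsf{m}_{X,Y});\lambda_{X\otimes Y};!(\mathsf{n}_{X,Y})$ and $\mathsf{n}_K;\mathsf{m}_K=\mathsf{T}(\mathsf{m}_K);\lambda_K;!(\mathsf{n}_K)$. *)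

(* Equality of morphisms is Leibniz equality on hom-types.
   Composition is written in DIAGRAMMATIC order: [comp f g] = f ; g. *)

Record SMCData : Type := {
  ob : Type;
  hom : ob -> ob -> Type;
  idm : forall A : ob, hom A A;
  comp : forall A B C : ob, hom A B -> hom B C -> hom A C;
  tens : ob -> ob -> ob;
  tensm : forall A B C D : ob, hom A B -> hom C D -> hom (tens A C) (tens B D);
  unit : ob;
  alpha : forall A B C : ob, hom (tens A (tens B C)) (tens (tens A B) C);
  alpha_inv : forall A B C : ob, hom (tens (tens A B) C) (tens A (tens B C));
  ell : forall A : ob, hom (tens unit A) A;
  ell_inv : forall A : ob, hom A (tens unit A);
  rho : forall A : ob, hom (tens A unit) A;
  rho_inv : forall A : ob, hom A (tens A unit);
  sigma : forall A B : ob, hom (tens A B) (tens B A)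
}.

Arguments hom {s} _ _.
Arguments idm {s} _.
Arguments comp {s A B C} _ _.
Arguments tens {s} _ _.
Arguments tensm {s A B C D} _ _.
Arguments unit {s}.
Arguments alpha {s} _ _ _.
Arguments alpha_inv {s} _ _ _.
Arguments ell {s} _.
Arguments ell_inv {s} _.
Arguments rho {s} _.
Arguments rho_inv {s} _.
Arguments sigma {s} _ _.

Declare Scope cat_scope.
Delimit Scope cat_scope with cat.
Open Scope cat_scope.
Notation "f ;; g" := (comp f g) (at level 40, left associativity) : cat_scope.
Notation "A ⊗ B" := (tens A B) (at level 30, right associativity) : cat_scope.
Notation "f ⊠ g" := (tensm f g) (at level 30, right associativity) : cat_scope.

Definition SMC_axioms (C : SMCData) : Prop :=
  (forall (A B : ob C) (f : hom A B), idm A ;; f = f) /\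
  (forall (A B : ob C) (f : hom A B), f ;; idm B = f) /\
  (forall (A B D E : ob C) (f : hom A B) (g : hom B D) (h : hom D E),
      (f ;; g) ;; h = f ;; (g ;; h)) /\
  (forall A B : ob C, idm A ⊠ idm B = idm (A ⊗ B)) /\
  (forall (A1 A2 A3 B1 B2 B3 : ob C) (f : hom A1 A2) (g : hom A2 A3)
          (f' : hom B1 B2) (g' : hom B2 B3),
      (f ;; g) ⊠ (f' ;; g') = (f ⊠ f') ;; (g ⊠ g')) /\
  (forall A B D : ob C, alpha A B D ;; alpha_inv A B D = idm _) /\
  (forall A B D : ob C, alpha_inv A B D ;; alpha A B D = idm _) /\
  (forall (A A' B B' D D' : ob C) (f : hom A A') (g : hom B B') (h : hom D D'),
      (f ⊠ (g ⊠ h)) ;; alpha A' B' D' = alpha A B D ;; ((f ⊠ g) ⊠ h)) /\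
  (forall A : ob C, ell A ;; ell_inv A = idm _) /\
  (forall A : ob C, ell_inv A ;; ell A = idm _) /\
  (forall (A A' : ob C) (f : hom A A'), (idm unit ⊠ f) ;; ell A' = ell A ;; f) /\
  (forall A : ob C, rho A ;; rho_inv A = idm _) /\
  (forall A : ob C, rho_inv A ;; rho A = idm _) /\
  (forall (A A' : ob C) (f : hom A A'), (f ⊠ idm unit) ;; rho A' = rho A ;; f) /\
  (forall (A A' B B' : ob C) (f : hom A A') (g : hom B B'),
      (f ⊠ g) ;; sigma A' B' = sigma A B ;; (g ⊠ f)) /\
  (forall A B : ob C, sigma A B ;; sigma B A = idm _) /\
  (forall A B D E : ob C,
      alpha A B (D ⊗ E) ;; alpha (A ⊗ B) D E
      = (idm A ⊠ alpha B D E) ;; alpha A (B ⊗ D) E ;; (alpha A B D ⊠ idm E)) /\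
  (forall A B : ob C,
      alpha A unit B ;; (rho A ⊠ idm B) = idm A ⊠ ell B) /\
  (forall A B D : ob C,
      alpha A B D ;; sigma (A ⊗ B) D ;; alpha D A B
      = (idm A ⊠ sigma B D) ;; alpha A D B ;; (sigma A D ⊠ idm B)).

Record SMC : Type := {
  smc_data :> SMCData;
  smc_ax : SMC_axioms smc_data
}.

Section Comonad.
Variable C : SMC.

Definition tau (A B D E : ob C) : hom ((A ⊗ B) ⊗ (D ⊗ E)) ((A ⊗ D) ⊗ (B ⊗ E)) :=
  alpha_inv A B (D ⊗ E) ;; (idm A ⊠ alpha B D E)
  ;; (idm A ⊠ (sigma B D ⊠ idm E)) ;; (idm A ⊠ alpha_inv D B E)
  ;; alpha A D (B ⊗ E).

Record ComonadData : Type := {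
  bang : ob C -> ob C;
  bmap : forall A B : ob C, hom A B -> hom (bang A) (bang B);
  delta : forall A : ob C, hom (bang A) (bang (bang A));
  eps : forall A : ob C, hom (bang A) A;
  mm : forall A B : ob C, hom (bang A ⊗ bang B) (bang (A ⊗ B));
  mK : hom (@unit C) (bang unit)
}.

Definition SMComonad_axioms (B : ComonadData) : Prop :=
  let b := bang B in
  let bm := bmap B in
  (forall A : ob C, bm A A (idm A) = idm (b A)) /\
  (forall (A1 A2 A3 : ob C) (f : hom A1 A2) (g : hom A2 A3),
      bm _ _ (f ;; g) = bm _ _ f ;; bm _ _ g) /\
  (forall (A A' : ob C) (f : hom A A'),
      bm _ _ f ;; delta B A' = delta B A ;; bm _ _ (bm _ _ f)) /\
  (forall (A A' : ob C) (f : hom A A'), bm _ _ f ;; eps B A' = eps B A ;; f) /\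
  (forall A : ob C, delta B A ;; eps B (b A) = idm (b A)) /\
  (forall A : ob C, delta B A ;; bm _ _ (eps B A) = idm (b A)) /\
  (forall A : ob C, delta B A ;; delta B (b A) = delta B A ;; bm _ _ (delta B A)) /\
  (forall (A A' D D' : ob C) (f : hom A A') (g : hom D D'),
      (bm _ _ f ⊠ bm _ _ g) ;; mm B A' D' = mm B A D ;; bm _ _ (f ⊠ g)) /\
  (forall A D E : ob C,
      alpha (b A) (b D) (b E) ;; (mm B A D ⊠ idm (b E)) ;; mm B (A ⊗ D) E
      = (idm (b A) ⊠ mm B D E) ;; mm B A (D ⊗ E) ;; bm _ _ (alpha A D E)) /\
  (forall A : ob C,
      ell (b A) = (mK B ⊠ idm (b A)) ;; mm B unit A ;; bm _ _ (ell A)) /\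
  (forall A : ob C,
      rho (b A) = (idm (b A) ⊠ mK B) ;; mm B A unit ;; bm _ _ (rho A)) /\
  (forall A D : ob C,
      sigma (b A) (b D) ;; mm B D A = mm B A D ;; bm _ _ (sigma A D)) /\
  (forall A D : ob C,
      mm B A D ;; delta B (A ⊗ D)
      = (delta B A ⊠ delta B D) ;; mm B (b A) (b D) ;; bm _ _ (mm B A D)) /\
  (mK B ;; delta B unit = mK B ;; bm _ _ (mK B)) /\
  (forall A D : ob C, mm B A D ;; eps B (A ⊗ D) = eps B A ⊠ eps B D) /\
  (mK B ;; eps B unit = idm unit).

Record SMComonad : Type := {
  cmd_data :> ComonadData;
  cmd_ax : SMComonad_axioms cmd_data
}.

End Comonad.

Arguments bang {C} _ _.
Arguments bmap {C} _ {A B} _.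
Arguments delta {C} _ _.
Arguments eps {C} _ _.
Arguments mm {C} _ _ _.
Arguments mK {C} _.

Section Bimonoids.
Variable C : SMC.

Definition is_cocomm_bimonoid (A : ob C) (nabla : hom (A ⊗ A) A) (u : hom unit A)
    (Delta : hom A (A ⊗ A)) (e : hom A unit) : Prop :=
  ((idm A ⊠ nabla) ;; nabla = alpha A A A ;; (nabla ⊠ idm A) ;; nabla) /\
  (ell_inv A ;; (u ⊠ idm A) ;; nabla = idm A) /\
  (rho_inv A ;; (idm A ⊠ u) ;; nabla = idm A) /\
  (Delta ;; (idm A ⊠ Delta) ;; alpha A A A = Delta ;; (Delta ⊠ idm A)) /\
  (Delta ;; (e ⊠ idm A) ;; ell A = idm A) /\
  (Delta ;; (idm A ⊠ e) ;; rho A = idm A) /\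
  (nabla ;; Delta = (Delta ⊠ Delta) ;; tau C A A A A ;; (nabla ⊠ nabla)) /\
  (u ;; Delta = ell_inv unit ;; (u ⊠ u)) /\
  (nabla ;; e = (e ⊠ e) ;; ell unit) /\
  (u ;; e = idm unit) /\
  (Delta ;; sigma A A = Delta).

Definition underlying_bimonoid : Type :=
  { A : ob C & (hom (A ⊗ A) A * hom unit A * hom A (A ⊗ A) * hom A unit)%type }.

End Bimonoids.
Arguments is_cocomm_bimonoid {C A} nabla u Delta e.

Section Correspondence.
Variable C : SMC.
Variable B : SMComonad C.

Local Notation "! A" := (bang B A) (at level 20).
Local Notation "!! f" := (bmap B f) (at level 20).

(* (1) Cocommutative bimonoids in the Eilenberg-Moore category X^! with the *)
(* monoidal structure (A,w) (x)^m (B,w') = (A ⊗ B, (w ⊗ w') ; m) and     *)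
(* unit (K, m_K).  Since composition, tensor and coherence maps of X^! are   *)
(* those of X, such a bimonoid is a !-coalgebra (A, w) together with a       *)
(* cocommutative bimonoid structure on A in X whose four structure maps are  *)
(* coalgebra morphisms.                                                      *)

Definition is_coalgebra (A : ob C) (w : hom A (!A)) : Prop :=
  w ;; eps B A = idm A /\ w ;; delta B A = w ;; !! w.

Definition is_coalg_morph (A A' : ob C) (w : hom A (!A)) (w' : hom A' (!A'))
    (f : hom A A') : Prop :=
  f ;; w' = w ;; !! f.
Arguments is_coalg_morph {A A'} w w' f.

Definition tens_coalg (A A' : ob C) (w : hom A (!A)) (w' : hom A' (!A'))
  : hom (A ⊗ A') (!(A ⊗ A')) := (w ⊠ w') ;; mm B A A'.
Arguments tens_coalg {A A'} w w'.

Record CoalgBimonoid : Type := {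
  cb_ob : ob C;
  cb_coalg : hom cb_ob (!cb_ob);
  cb_nabla : hom (cb_ob ⊗ cb_ob) cb_ob;
  cb_unit : hom unit cb_ob;
  cb_Delta : hom cb_ob (cb_ob ⊗ cb_ob);
  cb_counit : hom cb_ob unit;
  cb_is_coalg : is_coalgebra cb_ob cb_coalg;
  cb_nabla_morph : is_coalg_morph (tens_coalg cb_coalg cb_coalg) cb_coalg cb_nabla;
  cb_unit_morph : is_coalg_morph (mK B) cb_coalg cb_unit;
  cb_Delta_morph : is_coalg_morph cb_coalg (tens_coalg cb_coalg cb_coalg) cb_Delta;
  cb_counit_morph : is_coalg_morph cb_coalg (mK B) cb_counit;
  cb_bimonoid : is_cocomm_bimonoid cb_nabla cb_unit cb_Delta cb_counit
}.

Definition cb_underlying (x : CoalgBimonoid) : underlying_bimonoid C :=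
  existT _ (cb_ob x) (cb_nabla x, cb_unit x, cb_Delta x, cb_counit x).

Section MonadOfBimonoid.
Variables (A : ob C) (nabla : hom (A ⊗ A) A) (u : hom unit A)
          (Delta : hom A (A ⊗ A)) (e : hom A unit).

Definition mu_nabla (X : ob C) : hom (A ⊗ (A ⊗ X)) (A ⊗ X) :=
  alpha A A X ;; (nabla ⊠ idm X).
Definition eta_u (X : ob C) : hom X (A ⊗ X) :=
  ell_inv X ;; (u ⊠ idm X).
Definition n_Delta (X Y : ob C) : hom (A ⊗ (X ⊗ Y)) ((A ⊗ X) ⊗ (A ⊗ Y)) :=
  (Delta ⊠ idm (X ⊗ Y)) ;; tau C A A X Y.
Definition n_e : hom (A ⊗ unit) unit := rho A ;; e.

Variable lam : forall X : ob C, hom (A ⊗ !X) (!(A ⊗ X)).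

Definition is_natural_lam : Prop :=
  forall (X Y : ob C) (f : hom X Y),
    (idm A ⊠ !! f) ;; lam Y = lam X ;; !! (idm A ⊠ f).

Definition is_mixed_distributive_law : Prop :=
  is_natural_lam /\
  (forall X : ob C,
      mu_nabla (!X) ;; lam X
      = (idm A ⊠ lam X) ;; lam (A ⊗ X) ;; !! (mu_nabla X)) /\
  (forall X : ob C, eta_u (!X) ;; lam X = !! (eta_u X)) /\
  (forall X : ob C,
      (idm A ⊠ delta B X) ;; lam (!X) ;; !! (lam X) = lam X ;; delta B (A ⊗ X)) /\
  (forall X : ob C, lam X ;; eps B (A ⊗ X) = idm A ⊠ eps B X).

Definition is_sym_monoidal_mixed_distributive_law : Prop :=
  is_mixed_distributive_law /\
  (forall X Y : ob C,
      n_Delta (!X) (!Y) ;; (lam X ⊠ lam Y) ;; mm B (A ⊗ X) (A ⊗ Y)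
      = (idm A ⊠ mm B X Y) ;; lam (X ⊗ Y) ;; !! (n_Delta X Y)) /\
  (n_e ;; mK B = (idm A ⊠ mK B) ;; lam unit ;; !! n_e).

Definition lam_alpha_compat : Prop :=
  forall X Y : ob C,
    alpha A (!X) (!Y) ;; (lam X ⊠ idm (!Y)) ;; mm B (A ⊗ X) Y
    = (idm A ⊠ mm B X Y) ;; lam (X ⊗ Y) ;; !! (alpha A X Y).

End MonadOfBimonoid.
Arguments is_sym_monoidal_mixed_distributive_law {A} nabla u Delta e lam.
Arguments lam_alpha_compat {A} lam.

Record DistBimonoid : Type := {
  db_ob : ob C;
  db_nabla : hom (db_ob ⊗ db_ob) db_ob;
  db_unit : hom unit db_ob;
  db_Delta : hom db_ob (db_ob ⊗ db_ob);
  db_counit : hom db_ob unit;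
  db_lam : forall X : ob C, hom (db_ob ⊗ !X) (!(db_ob ⊗ X));
  db_bimonoid : is_cocomm_bimonoid db_nabla db_unit db_Delta db_counit;
  db_law : is_sym_monoidal_mixed_distributive_law db_nabla db_unit db_Delta db_counit db_lam;
  db_alpha : lam_alpha_compat db_lam
}.

Definition db_underlying (y : DistBimonoid) : underlying_bimonoid C :=
  existT _ (db_ob y) (db_nabla y, db_unit y, db_Delta y, db_counit y).

End Correspondence.

Arguments CoalgBimonoid {C} B.
Arguments DistBimonoid {C} B.
Arguments cb_underlying {C B} x.
Arguments db_underlying {C B} y.

From Stdlib Require Import ssreflect FunctionalExtensionality ProofIrrelevance.

(* A !-coalgebra structure w on A gives the distributive law
   lam_X = (w ⊗ 1) ; m_{A,X}, and a distributive law lam gives back the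
   coalgebra w = rho^-1 ; (1 ⊗ m_K) ; lam_K ; !(rho).  Compatibility of lam with
   the associator forces lam_X = (w ⊗ 1) ; m_{A,X} for this w, so the two
   constructions are mutually inverse.  Under them the counit and
   coassociativity of w correspond to the eps- and delta-axioms of lam, and the
   four bimonoid maps being coalgebra morphisms corresponds to the monad
   (mu, eta) and comonoidal (n, n_K) axioms of lam. *)

Section Correspondence.
Variable C : SMC.

(** * Coherence in a symmetric monoidal category *)

Ltac smc_axiom := have := smc_ax C; rewrite /SMC_axioms; intuition.

Lemma id_comp {A B : ob C} (f : hom A B) : idm A ;; f = f.
Proof. smc_axiom. Qed.
Lemma comp_id {A B : ob C} (f : hom A B) : f ;; idm B = f.
Proof. smc_axiom. Qed.
Lemma comp_assoc {A B D E : ob C} {f : hom A B} {g : hom B D} {h : hom D E} :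
  (f ;; g) ;; h = f ;; (g ;; h).
Proof. smc_axiom. Qed.
Lemma tens_id {A B : ob C} : idm A ⊠ idm B = idm (A ⊗ B).
Proof. smc_axiom. Qed.
Lemma tens_comp {A1 A2 A3 B1 B2 B3 : ob C} {f : hom A1 A2} {g : hom A2 A3}
    {f' : hom B1 B2} {g' : hom B2 B3} :
  (f ;; g) ⊠ (f' ;; g') = (f ⊠ f') ;; (g ⊠ g').
Proof. smc_axiom. Qed.
Lemma alphaK {A B D : ob C} : alpha A B D ;; alpha_inv A B D = idm _.
Proof. smc_axiom. Qed.
Lemma alpha_invK {A B D : ob C} : alpha_inv A B D ;; alpha A B D = idm _.
Proof. smc_axiom. Qed.
Lemma alpha_nat {A A' B B' D D' : ob C} {f : hom A A'} {g : hom B B'} {h : hom D D'} :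
  (f ⊠ (g ⊠ h)) ;; alpha A' B' D' = alpha A B D ;; ((f ⊠ g) ⊠ h).
Proof. smc_axiom. Qed.
Lemma ellK {A : ob C} : ell A ;; ell_inv A = idm _.
Proof. smc_axiom. Qed.
Lemma ell_invK {A : ob C} : ell_inv A ;; ell A = idm _.
Proof. smc_axiom. Qed.
Lemma ell_nat {A A' : ob C} {f : hom A A'} : (idm unit ⊠ f) ;; ell A' = ell A ;; f.
Proof. smc_axiom. Qed.
Lemma rhoK {A : ob C} : rho A ;; rho_inv A = idm _.
Proof. smc_axiom. Qed.
Lemma rho_invK {A : ob C} : rho_inv A ;; rho A = idm _.
Proof. smc_axiom. Qed.
Lemma rho_nat {A A' : ob C} {f : hom A A'} : (f ⊠ idm unit) ;; rho A' = rho A ;; f.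
Proof. smc_axiom. Qed.
Lemma sigma_nat {A A' B B' : ob C} {f : hom A A'} {g : hom B B'} :
  (f ⊠ g) ;; sigma A' B' = sigma A B ;; (g ⊠ f).
Proof. smc_axiom. Qed.
Lemma sigmaK {A B : ob C} : sigma A B ;; sigma B A = idm _.
Proof. smc_axiom. Qed.
Lemma pentagon {A B D E : ob C} :
  alpha A B (D ⊗ E) ;; alpha (A ⊗ B) D E
  = (idm A ⊠ alpha B D E) ;; (alpha A (B ⊗ D) E ;; (alpha A B D ⊠ idm E)).
Proof. rewrite -comp_assoc; smc_axiom. Qed.
Lemma triangle {A B : ob C} : alpha A unit B ;; (rho A ⊠ idm B) = idm A ⊠ ell B.
Proof. smc_axiom. Qed.
Lemma hexagon {A B D : ob C} :
  alpha A B D ;; (sigma (A ⊗ B) D ;; alpha D A B)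
  = (idm A ⊠ sigma B D) ;; (alpha A D B ;; (sigma A D ⊠ idm B)).
Proof. rewrite -!comp_assoc; smc_axiom. Qed.

Lemma chain_rw2 {A B D E : ob C} {f : hom A B} {g : hom B D} {h : hom A D} :
  f ;; g = h -> forall r : hom D E, f ;; (g ;; r) = h ;; r.
Proof. by move=> <- r; rewrite comp_assoc. Qed.
Lemma chain_rw3 {A B D E F : ob C} {f : hom A B} {g : hom B D} {k : hom D E} {h : hom A E} :
  f ;; (g ;; k) = h -> forall r : hom E F, f ;; (g ;; (k ;; r)) = h ;; r.
Proof. by move=> <- r; rewrite !comp_assoc. Qed.
Lemma chain_rw4 {A B D E F G : ob C} {f : hom A B} {g : hom B D} {k : hom D E} {l : hom E F}
    {h : hom A F} :
  f ;; (g ;; (k ;; l)) = h -> forall r : hom F G, f ;; (g ;; (k ;; (l ;; r))) = h ;; r.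
Proof. by move=> <- r; rewrite !comp_assoc. Qed.
Lemma chain_rw5 {A B D E F G H : ob C} {f : hom A B} {g : hom B D} {k : hom D E} {l : hom E F}
    {m : hom F G} {h : hom A G} :
  f ;; (g ;; (k ;; (l ;; m))) = h ->
  forall r : hom G H, f ;; (g ;; (k ;; (l ;; (m ;; r)))) = h ;; r.
Proof. by move=> <- r; rewrite !comp_assoc. Qed.

(* Composites are kept right-associated; [rw E] rewrites with an equation whose
   left-hand side is a right-associated chain of up to five arrows occurring
   anywhere inside such a composite, and [rwr E] rewrites right-to-left. *)
Tactic Notation "rw" uconstr(E) :=
  first [ rewrite E | rewrite (chain_rw2 E) | rewrite (chain_rw3 E)
        | rewrite (chain_rw4 E) | rewrite (chain_rw5 E) ]; rewrite ?comp_assoc.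
Tactic Notation "rwr" uconstr(E) :=
  first [ rewrite -E | rewrite (chain_rw2 (eq_sym E)) | rewrite (chain_rw3 (eq_sym E))
        | rewrite (chain_rw4 (eq_sym E)) | rewrite (chain_rw5 (eq_sym E)) ];
  rewrite ?comp_assoc.
Tactic Notation "rw" uconstr(E) "in" hyp(H) :=
  first [ rewrite E in H | rewrite (chain_rw2 E) in H | rewrite (chain_rw3 E) in H
        | rewrite (chain_rw4 E) in H | rewrite (chain_rw5 E) in H ]; rewrite ?comp_assoc in H.

Lemma tensl_comp {A1 A2 A3 B : ob C} {f : hom A1 A2} {g : hom A2 A3} :
  (f ⊠ idm B) ;; (g ⊠ idm B) = (f ;; g) ⊠ idm B.
Proof. by rewrite -tens_comp id_comp. Qed.
Lemma tensr_comp {A1 A2 A3 B : ob C} {f : hom A1 A2} {g : hom A2 A3} :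
  (idm B ⊠ f) ;; (idm B ⊠ g) = idm B ⊠ (f ;; g).
Proof. by rewrite -tens_comp id_comp. Qed.
Lemma tens_lr {A A' B B' : ob C} {f : hom A A'} {g : hom B B'} :
  (f ⊠ idm B) ;; (idm A' ⊠ g) = f ⊠ g.
Proof. by rewrite -tens_comp id_comp comp_id. Qed.
Lemma tens_rl {A A' B B' : ob C} {f : hom A A'} {g : hom B B'} :
  (idm A ⊠ g) ;; (f ⊠ idm B') = f ⊠ g.
Proof. by rewrite -tens_comp id_comp comp_id. Qed.
Lemma tens_interchange {A A' B B' : ob C} {f : hom A A'} {g : hom B B'} :
  (f ⊠ idm B) ;; (idm A' ⊠ g) = (idm A ⊠ g) ;; (f ⊠ idm B').
Proof. by rewrite tens_lr tens_rl. Qed.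
Lemma tens_postcomp_r {A A' B B' D : ob C} {f : hom A A'} {g : hom B B'} {h : hom B' D} :
  (f ⊠ g) ;; (idm A' ⊠ h) = f ⊠ (g ;; h).
Proof. by rewrite -tens_comp comp_id. Qed.
Lemma tens_precomp_l {A A' B B' D : ob C} {f : hom A A'} {g : hom B B'} {h : hom D A} :
  (h ⊠ idm B) ;; (f ⊠ g) = (h ;; f) ⊠ g.
Proof. by rewrite -tens_comp id_comp. Qed.
Lemma tens_precomp_r {A A' B B' D : ob C} {f : hom A A'} {g : hom B B'} {h : hom D B} :
  (idm A ⊠ h) ;; (f ⊠ g) = f ⊠ (h ;; g).
Proof. by rewrite -tens_comp id_comp. Qed.

Lemma split_mono_cancel {A B D : ob C} (f : hom B D) (f' : hom D B) (g h : hom A B) :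
  f ;; f' = idm B -> g ;; f = h ;; f -> g = h.
Proof. by move=> ff' gh; rewrite -(comp_id g) -(comp_id h) -ff' -!comp_assoc gh. Qed.
Lemma split_epi_cancel {A B D : ob C} (f : hom A B) (f' : hom B A) (g h : hom B D) :
  f' ;; f = idm B -> f ;; g = f ;; h -> g = h.
Proof. by move=> f'f fg; rewrite -(id_comp g) -(id_comp h) -f'f !comp_assoc fg. Qed.

Lemma alpha_inv_nat {A A' B B' D D' : ob C} {f : hom A A'} {g : hom B B'} {h : hom D D'} :
  ((f ⊠ g) ⊠ h) ;; alpha_inv A' B' D' = alpha_inv A B D ;; (f ⊠ (g ⊠ h)).
Proof.
  apply: (split_mono_cancel _ _ _ _ alphaK).
  by rewrite !comp_assoc alpha_invK comp_id alpha_nat -comp_assoc alpha_invK id_comp.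
Qed.
Lemma ell_inv_nat {A A' : ob C} {f : hom A A'} : f ;; ell_inv A' = ell_inv A ;; (idm unit ⊠ f).
Proof.
  apply: (split_mono_cancel _ _ _ _ ellK).
  by rewrite !comp_assoc ell_invK comp_id ell_nat -comp_assoc ell_invK id_comp.
Qed.
Lemma rho_inv_nat {A A' : ob C} {f : hom A A'} : f ;; rho_inv A' = rho_inv A ;; (f ⊠ idm unit).
Proof.
  apply: (split_mono_cancel _ _ _ _ rhoK).
  by rewrite !comp_assoc rho_invK comp_id rho_nat -comp_assoc rho_invK id_comp.
Qed.
Lemma alpha_nat_l {A A' B D : ob C} {f : hom A A'} :
  alpha A B D ;; ((f ⊠ idm B) ⊠ idm D) = (f ⊠ idm (B ⊗ D)) ;; alpha A' B D.
Proof. by rewrite -tens_id alpha_nat. Qed.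
Lemma alpha_nat_r {A B D D' : ob C} {h : hom D D'} :
  alpha A B D ;; (idm (A ⊗ B) ⊠ h) = (idm A ⊠ (idm B ⊠ h)) ;; alpha A B D'.
Proof. by rewrite alpha_nat tens_id. Qed.
Lemma alpha_inv_nat_r {A B D D' : ob C} {h : hom D D'} :
  (idm (A ⊗ B) ⊠ h) ;; alpha_inv A B D' = alpha_inv A B D ;; (idm A ⊠ (idm B ⊠ h)).
Proof. by rewrite -tens_id alpha_inv_nat. Qed.

Lemma tens_unit_r_inj {A B : ob C} (f g : hom A B) : f ⊠ idm unit = g ⊠ idm unit -> f = g.
Proof. by move=> fg; rewrite -(id_comp f) -(id_comp g) -rho_invK !comp_assoc -!rho_nat fg. Qed.
Lemma tens_unit_l_inj {A B : ob C} (f g : hom A B) : idm unit ⊠ f = idm unit ⊠ g -> f = g.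
Proof. by move=> fg; rewrite -(id_comp f) -(id_comp g) -ell_invK !comp_assoc -!ell_nat fg. Qed.
Lemma tens_inverse {A B A' B' : ob C} {f : hom A B} {f' : hom B A}
    {g : hom A' B'} {g' : hom B' A'} :
  f ;; f' = idm A -> g ;; g' = idm A' -> (f ⊠ g) ;; (f' ⊠ g') = idm _.
Proof. by move=> ff' gg'; rewrite -tens_comp ff' gg' tens_id. Qed.

Lemma triangle_inv {A B : ob C} : (idm A ⊠ ell_inv B) ;; alpha A unit B = rho_inv A ⊠ idm B.
Proof.
  apply: (split_mono_cancel _ _ _ _ (tens_inverse rhoK (comp_id _))).
  by rewrite comp_assoc triangle tensr_comp ell_invK tens_id tensl_comp rho_invK tens_id.
Qed.

Lemma alpha_rho {A B : ob C} : alpha A B unit ;; rho (A ⊗ B) = idm A ⊠ rho B.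
Proof.
  apply: tens_unit_r_inj.
  set P := (idm A ⊠ alpha B unit unit) ;; alpha A (B ⊗ unit) unit.
  have P_split_epi :
    (alpha_inv A (B ⊗ unit) unit ;; (idm A ⊠ alpha_inv B unit unit)) ;; P = idm _.
  { rewrite /P !comp_assoc. rw tensr_comp. by rewrite alpha_invK tens_id id_comp alpha_invK. }
  apply: (split_epi_cancel P _ _ _ P_split_epi).
  rewrite /P -tensl_comp !comp_assoc.
  rwr pentagon. rw triangle. rw alpha_nat_r. rewrite -triangle -tensr_comp !comp_assoc.
  by rw alpha_nat.
Qed.
Lemma alpha_ell {A B : ob C} : alpha unit A B ;; (ell A ⊠ idm B) = ell (A ⊗ B).
Proof.
  apply: tens_unit_l_inj. apply: (split_mono_cancel _ _ _ _ alphaK).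
  rewrite -tensr_comp !comp_assoc. rw alpha_nat.
  rewrite -triangle -tensl_comp ?comp_assoc. rwr pentagon. rw alpha_nat_l. by rw triangle.
Qed.
Lemma ell_unit : ell (@unit C) = rho unit.
Proof.
  apply: tens_unit_r_inj. apply: (split_epi_cancel (alpha unit unit unit) _ _ _ alpha_invK).
  rewrite alpha_ell triangle. apply: (split_mono_cancel _ _ _ _ ellK). by rewrite ell_nat.
Qed.

Lemma sigma_rho {D : ob C} : sigma unit D ;; rho D = ell D.
Proof.
  set phi := ell_inv D ;; (sigma unit D ;; rho D).
  have sigma_phi : sigma unit D = (idm unit ⊠ phi) ;; sigma unit D.
  { have E := f_equal (fun z => (idm unit ⊠ ell_inv D) ;; (z ;; rho (D ⊗ unit)))
                (@hexagon unit unit D).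
    simpl in E. rewrite !comp_assoc in E.
    rw triangle_inv in E. rw sigma_nat in E. rw alpha_rho in E. rw tensr_comp in E.
    rewrite rho_invK tens_id comp_id in E.
    rewrite {1}E. rw rho_nat. rw alpha_rho. rw tensr_comp. by rw tensr_comp. }
  have phi_id : idm unit ⊠ phi = idm unit ⊠ idm D.
  { by rewrite tens_id -(comp_id (idm unit ⊠ phi)) -(@sigmaK unit D) -comp_assoc -sigma_phi. }
  move/tens_unit_l_inj: phi_id => phi_id.
  by rewrite -(id_comp (sigma unit D ;; rho D)) -ellK comp_assoc -/phi phi_id comp_id.
Qed.
Lemma sigma_ell {D : ob C} : sigma D unit ;; ell D = rho D.
Proof. by rewrite -sigma_rho -comp_assoc sigmaK id_comp. Qed.

Lemma sigma_tens_nat {A A' B B' D D' : ob C} {g : hom A A'} {h : hom B B'} {k : hom D D'} :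
  ((g ⊠ h) ⊠ k) ;; (sigma A' B' ⊠ idm D') = (sigma A B ⊠ idm D) ;; ((h ⊠ g) ⊠ k).
Proof. by rewrite -!tens_comp !id_comp !comp_id sigma_nat. Qed.

Lemma tau_nat {A A' B B' D D' E E' : ob C} {f : hom A A'} {g : hom B B'} {h : hom D D'}
    {k : hom E E'} :
  ((f ⊠ g) ⊠ (h ⊠ k)) ;; tau C A' B' D' E' = tau C A B D E ;; ((f ⊠ h) ⊠ (g ⊠ k)).
Proof.
  rewrite /tau !comp_assoc. rw alpha_inv_nat. do 3 rw tens_postcomp_r.
  rwr alpha_nat. do 2 rw tensr_comp. rw tens_precomp_r.
  congr (_ ;; (_ ⊠ _ ;; _)).
  rw alpha_nat. rw sigma_tens_nat. by rw alpha_inv_nat.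
Qed.

Lemma alpha_inv_rho {A B : ob C} : alpha_inv A B unit ;; (idm A ⊠ rho B) = rho (A ⊗ B).
Proof. by rewrite -alpha_rho -comp_assoc alpha_invK id_comp. Qed.
Lemma rho_inv_tens {A B : ob C} : rho_inv (A ⊗ B) = (idm A ⊠ rho_inv B) ;; alpha A B unit.
Proof.
  apply: (split_mono_cancel _ _ _ _ rhoK).
  by rewrite rho_invK comp_assoc alpha_rho tensr_comp rho_invK tens_id.
Qed.
Lemma alpha_inv_ell {A B : ob C} : alpha_inv unit A B ;; ell (A ⊗ B) = ell A ⊠ idm B.
Proof. by rewrite -alpha_ell -comp_assoc alpha_invK id_comp. Qed.
Lemma ell_inv_unit : ell_inv (@unit C) = rho_inv unit.
Proof. apply: (split_mono_cancel _ _ _ _ ellK). by rewrite ell_invK ell_unit rho_invK. Qed.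

Lemma rho_tens_tau {A B : ob C} :
  rho (A ⊗ B) = (idm (A ⊗ B) ⊠ rho_inv unit) ;; (tau C A B unit unit ;; (rho A ⊠ rho B)).
Proof.
  rewrite /tau !comp_assoc -(@tens_lr _ _ _ _ (rho A) (rho B)).
  rw triangle. do 3 rw tensr_comp. rw alpha_inv_ell. rw tensl_comp. rewrite sigma_ell.
  rw tensr_comp. rw triangle. rw alpha_inv_nat_r. do 2 rw tensr_comp.
  by rewrite ell_unit rho_invK tens_id id_comp alpha_inv_rho.
Qed.

Lemma rho_inv_tens_tau {A B : ob C} :
  rho_inv (A ⊗ B) ;; ((idm (A ⊗ B) ⊠ rho_inv unit) ;; tau C A B unit unit)
  = rho_inv A ⊠ rho_inv B.
Proof.
  apply: (split_mono_cancel _ _ _ _ (tens_inverse rhoK rhoK)).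
  (* [comp] is a projection, so rewriting with [comp_assoc] would unfold [tau];
     generalizing it keeps it atomic (likewise below). *)
  have := @rho_tens_tau A B; move: (tau C A B unit unit) => t rho_tens.
  by rewrite !comp_assoc -rho_tens rho_invK -tens_comp !rho_invK tens_id.
Qed.

(** * Symmetric monoidal comonads *)

Variable B : SMComonad C.

Ltac comonad_axiom := have := cmd_ax C B; rewrite /SMComonad_axioms /=; intuition.

Lemma bmap_id {A : ob C} : bmap B (idm A) = idm (bang B A).
Proof. comonad_axiom. Qed.
Lemma bmap_comp {A1 A2 A3 : ob C} {f : hom A1 A2} {g : hom A2 A3} :
  bmap B (f ;; g) = bmap B f ;; bmap B g.
Proof. comonad_axiom. Qed.
Lemma delta_nat {A A' : ob C} {f : hom A A'} :
  bmap B f ;; delta B A' = delta B A ;; bmap B (bmap B f).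
Proof. comonad_axiom. Qed.
Lemma eps_nat {A A' : ob C} {f : hom A A'} : bmap B f ;; eps B A' = eps B A ;; f.
Proof. comonad_axiom. Qed.
Lemma mm_nat {A A' D D' : ob C} {f : hom A A'} {g : hom D D'} :
  (bmap B f ⊠ bmap B g) ;; mm B A' D' = mm B A D ;; bmap B (f ⊠ g).
Proof. comonad_axiom. Qed.
Lemma mm_assoc {A D E : ob C} :
  alpha _ _ _ ;; ((mm B A D ⊠ idm (bang B E)) ;; mm B (A ⊗ D) E)
  = (idm (bang B A) ⊠ mm B D E) ;; (mm B A (D ⊗ E) ;; bmap B (alpha A D E)).
Proof. rewrite -!comp_assoc; comonad_axiom. Qed.
Lemma mm_ell {A : ob C} :
  ell (bang B A) = (mK B ⊠ idm (bang B A)) ;; (mm B unit A ;; bmap B (ell A)).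
Proof. rewrite -!comp_assoc; comonad_axiom. Qed.
Lemma mm_rho {A : ob C} :
  rho (bang B A) = (idm (bang B A) ⊠ mK B) ;; (mm B A unit ;; bmap B (rho A)).
Proof. rewrite -!comp_assoc; comonad_axiom. Qed.
Lemma mm_sigma {A D : ob C} :
  sigma (bang B A) (bang B D) ;; mm B D A = mm B A D ;; bmap B (sigma A D).
Proof. comonad_axiom. Qed.
Lemma mm_delta {A D : ob C} :
  mm B A D ;; delta B (A ⊗ D)
  = (delta B A ⊠ delta B D) ;; (mm B (bang B A) (bang B D) ;; bmap B (mm B A D)).
Proof. rewrite -!comp_assoc; comonad_axiom. Qed.
Lemma mK_delta : mK B ;; delta B unit = mK B ;; bmap B (mK B).
Proof. comonad_axiom. Qed.
Lemma mm_eps {A D : ob C} : mm B A D ;; eps B (A ⊗ D) = eps B A ⊠ eps B D.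
Proof. comonad_axiom. Qed.
Lemma mK_eps : mK B ;; eps B unit = idm unit.
Proof. comonad_axiom. Qed.

Lemma mm_nat_l {A A' D : ob C} {f : hom A A'} :
  (bmap B f ⊠ idm (bang B D)) ;; mm B A' D = mm B A D ;; bmap B (f ⊠ idm D).
Proof. by rewrite -bmap_id mm_nat. Qed.
Lemma mm_nat_r {A D D' : ob C} {f : hom D D'} :
  (idm (bang B A) ⊠ bmap B f) ;; mm B A D' = mm B A D ;; bmap B (idm A ⊠ f).
Proof. by rewrite -bmap_id mm_nat. Qed.
Lemma bmap_inverse {A A' : ob C} {f : hom A A'} {g : hom A' A} :
  f ;; g = idm A -> bmap B f ;; bmap B g = idm _.
Proof. by move=> fg; rewrite -bmap_comp fg bmap_id. Qed.

Lemma ell_inv_mm {X : ob C} :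
  ell_inv (bang B X) ;; ((mK B ⊠ idm _) ;; mm B unit X) = bmap B (ell_inv X).
Proof.
  apply: (split_mono_cancel _ _ _ _ (bmap_inverse ellK)).
  by rewrite !comp_assoc -mm_ell ell_invK -bmap_comp ell_invK bmap_id.
Qed.
Lemma rho_inv_mm {X : ob C} :
  rho_inv (bang B X) ;; ((idm _ ⊠ mK B) ;; mm B X unit) = bmap B (rho_inv X).
Proof.
  apply: (split_mono_cancel _ _ _ _ (bmap_inverse rhoK)).
  by rewrite !comp_assoc -mm_rho rho_invK -bmap_comp rho_invK bmap_id.
Qed.

Lemma mm_alpha_inv {A D E : ob C} :
  alpha_inv _ _ _ ;; ((idm (bang B A) ⊠ mm B D E) ;; mm B A (D ⊗ E))
  = (mm B A D ⊠ idm (bang B E)) ;; (mm B (A ⊗ D) E ;; bmap B (alpha_inv A D E)).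
Proof.
  apply: (split_epi_cancel (alpha _ _ _) (alpha_inv _ _ _) _ _ alpha_invK).
  rw alphaK. rewrite id_comp. rw mm_assoc. by rewrite -bmap_comp alphaK bmap_id comp_id.
Qed.

Lemma mm_tau {A1 A2 A3 A4 : ob C} :
  (mm B A1 A2 ⊠ mm B A3 A4) ;; (mm B _ _ ;; bmap B (tau C A1 A2 A3 A4))
  = tau C _ _ _ _ ;; ((mm B A1 A3 ⊠ mm B A2 A4) ;; mm B _ _).
Proof.
  rewrite /tau !bmap_comp !comp_assoc -(@tens_rl _ _ _ _ (mm B A1 A2) (mm B A3 A4)) !comp_assoc.
  rwr mm_alpha_inv. do 3 rwr mm_nat_r. rw alpha_inv_nat_r. do 4 rw tensr_comp.
  rewrite -(@tens_rl _ _ _ _ (mm B A1 A3) (mm B A2 A4)) !comp_assoc.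
  rw alpha_nat_r. rw mm_assoc. do 4 rw tensr_comp.
  congr (_ ;; (_ ⊠ _ ;; _)).
  rwr mm_assoc. rwr mm_nat_l. rw tensl_comp. rwr mm_sigma. rewrite -tensl_comp !comp_assoc.
  by rw mm_alpha_inv.
Qed.

(** * The distributive law of a coalgebra *)

Section LawOfCoalgebra.
Variables (A : ob C) (w : hom A (bang B A)).

Definition lam_of_coalg (X : ob C) : hom (A ⊗ bang B X) (bang B (A ⊗ X)) :=
  (w ⊠ idm (bang B X)) ;; mm B A X.

Lemma lam_of_coalg_natural : is_natural_lam C B A lam_of_coalg.
Proof.
  move=> X Y f. rewrite /lam_of_coalg. rw tens_precomp_r. rwr mm_nat_r. rw tens_postcomp_r.
  by rewrite id_comp comp_id.
Qed.

Lemma lam_of_coalg_mu (nabla : hom (A ⊗ A) A) :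
  is_coalg_morph C B _ _ (tens_coalg C B _ _ w w) w nabla ->
  forall X : ob C, mu_nabla C A nabla (bang B X) ;; lam_of_coalg X
    = (idm A ⊠ lam_of_coalg X) ;; lam_of_coalg (A ⊗ X) ;; bmap B (mu_nabla C A nabla X).
Proof.
  rewrite /is_coalg_morph /tens_coalg => nabla_morph X.
  rewrite /lam_of_coalg /mu_nabla !comp_assoc. rw tensl_comp.
  rewrite nabla_morph -!tensl_comp !comp_assoc. rw mm_nat_l. rwr alpha_nat. rw mm_assoc.
  rewrite bmap_comp. rw tens_rl. by rw tens_postcomp_r.
Qed.

Lemma lam_of_coalg_eta (u : hom unit A) :
  is_coalg_morph C B _ _ (mK B) w u ->
  forall X : ob C, eta_u C A u (bang B X) ;; lam_of_coalg X = bmap B (eta_u C A u X).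
Proof.
  rewrite /is_coalg_morph => unit_morph X.
  rewrite /lam_of_coalg /eta_u !comp_assoc. rw tensl_comp.
  rewrite unit_morph -!tensl_comp !comp_assoc. rw mm_nat_l. rw ell_inv_mm.
  by rewrite bmap_comp.
Qed.

Lemma lam_of_coalg_delta :
  w ;; delta B A = w ;; bmap B w ->
  forall X : ob C, (idm A ⊠ delta B X) ;; lam_of_coalg (bang B X) ;; bmap B (lam_of_coalg X)
    = lam_of_coalg X ;; delta B (A ⊗ X).
Proof.
  move=> coassoc X.
  rewrite /lam_of_coalg !comp_assoc bmap_comp. rwr mm_nat_l. rw tensl_comp.
  rewrite -coassoc. rw tens_rl. rw mm_delta. by rw tens_precomp_l.
Qed.

Lemma lam_of_coalg_eps :
  w ;; eps B A = idm A -> forall X : ob C, lam_of_coalg X ;; eps B (A ⊗ X) = idm A ⊠ eps B X.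
Proof. by move=> counit X; rewrite /lam_of_coalg !comp_assoc mm_eps tens_precomp_l counit. Qed.

Lemma lam_of_coalg_n_Delta (Delta : hom A (A ⊗ A)) :
  is_coalg_morph C B _ _ w (tens_coalg C B _ _ w w) Delta ->
  forall X Y : ob C,
    n_Delta C A Delta (bang B X) (bang B Y) ;; (lam_of_coalg X ⊠ lam_of_coalg Y)
      ;; mm B (A ⊗ X) (A ⊗ Y)
    = (idm A ⊠ mm B X Y) ;; lam_of_coalg (X ⊗ Y) ;; bmap B (n_Delta C A Delta X Y).
Proof.
  rewrite /is_coalg_morph /tens_coalg => Delta_morph X Y.
  rewrite /lam_of_coalg /n_Delta.
  have := @tau_nat A (bang B A) A (bang B A) (bang B X) (bang B X) (bang B Y) (bang B Y)
            w w (idm _) (idm _).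
  have := @mm_tau A A X Y.
  move: (tau C A A (bang B X) (bang B Y)) (tau C (bang B A) (bang B A) (bang B X) (bang B Y))
        (tau C A A X Y) => t t' t'' mm_t tau_nat_t.
  rewrite !comp_assoc tens_comp !comp_assoc. rwr tau_nat_t. rwr mm_t.
  rewrite bmap_comp. rwr mm_nat_l. rewrite tens_id. do 4 rwr tens_comp.
  by rewrite !id_comp !comp_id Delta_morph.
Qed.

Lemma lam_of_coalg_n_e (e : hom A unit) :
  is_coalg_morph C B _ _ w (mK B) e ->
  n_e C A e ;; mK B = (idm A ⊠ mK B) ;; lam_of_coalg unit ;; bmap B (n_e C A e).
Proof.
  rewrite /is_coalg_morph => counit_morph.
  rewrite /lam_of_coalg /n_e !comp_assoc counit_morph bmap_comp. rwr tens_interchange.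
  rwr mm_rho. by rw rho_nat.
Qed.

Lemma lam_of_coalg_alpha : lam_alpha_compat C B A lam_of_coalg.
Proof.
  move=> X Y. rewrite /lam_of_coalg !comp_assoc -tensl_comp !comp_assoc.
  rw alpha_nat_l. rw mm_assoc. by rwr tens_interchange.
Qed.

End LawOfCoalgebra.

(** * The coalgebra of a distributive law *)

Definition coalg_of_lam (A : ob C) (lam : forall X : ob C, hom (A ⊗ bang B X) (bang B (A ⊗ X)))
  : hom A (bang B A) :=
  rho_inv A ;; ((idm A ⊠ mK B) ;; (lam unit ;; bmap B (rho A))).

Lemma coalg_of_lam_of_coalg (A : ob C) (w : hom A (bang B A)) :
  coalg_of_lam A (lam_of_coalg A w) = w.
Proof.
  rewrite /coalg_of_lam /lam_of_coalg ?comp_assoc. rwr tens_interchange. rwr mm_rho.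
  rw rho_nat. by rw rho_invK; rewrite id_comp.
Qed.

Section CoalgebraOfLaw.
Variables (A : ob C) (lam : forall X : ob C, hom (A ⊗ bang B X) (bang B (A ⊗ X))).
Hypothesis lam_natural : is_natural_lam C B A lam.

Local Notation w := (coalg_of_lam A lam).

Lemma lam_of_coalg_of_lam :
  lam_alpha_compat C B A lam -> forall X : ob C, lam_of_coalg A w X = lam X.
Proof.
  move=> compat X; have {}compat := compat unit X; rewrite !comp_assoc in compat.
  rewrite /coalg_of_lam /lam_of_coalg -!tensl_comp ?comp_assoc. rw mm_nat_l.
  rwr triangle_inv. rwr alpha_nat. rw compat. do 2 rw tensr_comp. rw ell_inv_mm.
  rw (lam_natural _ _ _). do 2 rwr bmap_comp. rw triangle. rw tensr_comp.
  by rewrite ell_invK tens_id bmap_id comp_id.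
Qed.

Lemma coalg_of_lam_counit :
  (forall X : ob C, lam X ;; eps B (A ⊗ X) = idm A ⊠ eps B X) -> w ;; eps B A = idm A.
Proof.
  move=> lam_eps. rewrite /coalg_of_lam ?comp_assoc. rw eps_nat. rw (lam_eps _). rw tensr_comp.
  by rewrite mK_eps tens_id id_comp rho_invK.
Qed.

Lemma coalg_of_lam_coassoc :
  (forall X : ob C, (idm A ⊠ delta B X) ;; lam (bang B X) ;; bmap B (lam X)
                    = lam X ;; delta B (A ⊗ X)) ->
  w ;; delta B A = w ;; bmap B w.
Proof.
  move=> lam_delta; have {}lam_delta := lam_delta unit; rewrite !comp_assoc in lam_delta.
  rewrite /coalg_of_lam ?comp_assoc. rw delta_nat. rwr lam_delta.
  rw tensr_comp. rewrite mK_delta. rwr tensr_comp.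
  rw (lam_natural _ _ _). rewrite !bmap_comp ?comp_assoc. rw (bmap_inverse rhoK).
  by rewrite id_comp.
Qed.

Lemma coalg_of_lam_counit_morph (e : hom A unit) :
  n_e C A e ;; mK B = (idm A ⊠ mK B) ;; lam unit ;; bmap B (n_e C A e) ->
  is_coalg_morph C B _ _ w (mK B) e.
Proof.
  rewrite /is_coalg_morph /coalg_of_lam /n_e => lam_n_e.
  rewrite ?comp_assoc. rwr bmap_comp. rewrite !comp_assoc in lam_n_e. rwr lam_n_e.
  by rw rho_invK; rewrite id_comp.
Qed.

Lemma coalg_of_lam_unit_morph (u : hom unit A) :
  (forall X : ob C, eta_u C A u (bang B X) ;; lam X = bmap B (eta_u C A u X)) ->
  is_coalg_morph C B _ _ (mK B) w u.
Proof.
  rewrite /is_coalg_morph /coalg_of_lam /eta_u => lam_eta.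
  have {}lam_eta := lam_eta unit; rewrite !comp_assoc in lam_eta.
  rewrite ?comp_assoc. rw rho_inv_nat. rw tens_interchange. rewrite -ell_inv_unit.
  rwr ell_inv_nat. rw lam_eta. rwr bmap_comp. rw rho_nat.
  rewrite -ell_unit. by rw ell_invK; rewrite id_comp.
Qed.

Lemma coalg_of_lam_nabla_morph (nabla : hom (A ⊗ A) A) :
  lam_alpha_compat C B A lam ->
  (forall X : ob C, mu_nabla C A nabla (bang B X) ;; lam X
     = (idm A ⊠ lam X) ;; lam (A ⊗ X) ;; bmap B (mu_nabla C A nabla X)) ->
  is_coalg_morph C B _ _ (tens_coalg C B _ _ w w) w nabla.
Proof.
  rewrite /is_coalg_morph /tens_coalg /mu_nabla => compat lam_mu.
  have {}lam_mu := lam_mu unit; rewrite !comp_assoc in lam_mu.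
  rewrite {1}/coalg_of_lam ?comp_assoc.
  rw rho_inv_nat. rewrite rho_inv_tens ?comp_assoc. rw tens_interchange. rw alpha_nat_r.
  rw lam_mu. rwr bmap_comp. rw rho_nat. rw alpha_rho. rewrite bmap_comp.
  rwr (lam_natural _ _ _). do 3 rw tensr_comp. rewrite -/(coalg_of_lam A lam).
  rewrite -(lam_of_coalg_of_lam compat) /lam_of_coalg ?comp_assoc. by rw tens_rl.
Qed.

Lemma coalg_of_lam_Delta_morph (Delta : hom A (A ⊗ A)) :
  (forall X Y : ob C,
     n_Delta C A Delta (bang B X) (bang B Y) ;; (lam X ⊠ lam Y) ;; mm B (A ⊗ X) (A ⊗ Y)
     = (idm A ⊠ mm B X Y) ;; lam (X ⊗ Y) ;; bmap B (n_Delta C A Delta X Y)) ->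
  is_coalg_morph C B _ _ w (tens_coalg C B _ _ w w) Delta.
Proof.
  rewrite /is_coalg_morph /tens_coalg /n_Delta => lam_n_Delta.
  rewrite {3}/coalg_of_lam ?comp_assoc -bmap_comp -rho_nat rho_tens_tau.
  have := lam_n_Delta unit unit.
  have := @tau_nat A A A A unit (bang B unit) unit (bang B unit) (idm A) (idm A) (mK B) (mK B).
  have := @rho_inv_tens_tau A A.
  move: (tau C A A unit unit) (tau C A A (bang B unit) (bang B unit))
    => t t' rho_inv_t tau_nat_t {}lam_n_Delta.
  rewrite tens_id in tau_nat_t. rewrite !comp_assoc in lam_n_Delta.
  rewrite ?comp_assoc. rw tens_interchange.
  rewrite bmap_comp -(comp_assoc (f := Delta ⊠ idm _)) bmap_comp ?comp_assoc.
  rwr (lam_natural _ _ _). rewrite -rho_inv_mm. rw tensr_comp. rw rho_inv_nat. rw tens_lr.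
  do 2 rwr tensr_comp.
  rwr lam_n_Delta. rwr mm_nat. rwr tens_interchange. rw tau_nat_t. rwr tens_interchange.
  rwr rho_inv_nat. rw rho_inv_t. do 3 rwr tens_comp. by rewrite -/(coalg_of_lam A lam).
Qed.
End CoalgebraOfLaw.

(** * The two kinds of bimonoids *)

Lemma lam_of_coalg_law {A : ob C} {w : hom A (bang B A)} {nabla : hom (A ⊗ A) A}
    {u : hom unit A} {Delta : hom A (A ⊗ A)} {e : hom A unit} :
  is_coalgebra C B A w ->
  is_coalg_morph C B _ _ (tens_coalg C B _ _ w w) w nabla ->
  is_coalg_morph C B _ _ (mK B) w u ->
  is_coalg_morph C B _ _ w (tens_coalg C B _ _ w w) Delta ->
  is_coalg_morph C B _ _ w (mK B) e ->
  is_sym_monoidal_mixed_distributive_law C B A nabla u Delta e (lam_of_coalg A w).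
Proof.
  move=> [counit coassoc] nabla_morph unit_morph Delta_morph counit_morph.
  split; [split; [|split; [|split; [|split]]] | split].
  - exact: lam_of_coalg_natural.
  - exact: lam_of_coalg_mu.
  - exact: lam_of_coalg_eta.
  - exact: lam_of_coalg_delta.
  - exact: lam_of_coalg_eps.
  - exact: lam_of_coalg_n_Delta.
  - exact: lam_of_coalg_n_e.
Qed.

Definition dist_of_coalg_bimonoid (x : CoalgBimonoid B) : DistBimonoid B :=
  {| db_ob := cb_ob C B x;
     db_nabla := cb_nabla C B x;
     db_unit := cb_unit C B x;
     db_Delta := cb_Delta C B x;
     db_counit := cb_counit C B x;
     db_lam := lam_of_coalg _ (cb_coalg C B x);
     db_bimonoid := cb_bimonoid C B x;
     db_law := lam_of_coalg_law (cb_is_coalg C B x) (cb_nabla_morph C B x)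
                 (cb_unit_morph C B x) (cb_Delta_morph C B x) (cb_counit_morph C B x);
     db_alpha := lam_of_coalg_alpha _ _ |}.

Section CoalgebraOfDistBimonoid.
Variable y : DistBimonoid B.

Local Notation A := (db_ob C B y).
Local Notation lam := (db_lam C B y).
Local Notation w := (coalg_of_lam _ (db_lam C B y)).

Lemma db_natural : is_natural_lam C B A lam.
Proof. by have [[]] := db_law C B y. Qed.

Lemma db_is_coalgebra : is_coalgebra C B A w.
Proof.
  have [[_ [_ [_ [lam_delta lam_eps]]]] _] := db_law C B y.
  split; [exact: coalg_of_lam_counit | exact: coalg_of_lam_coassoc db_natural _].
Qed.

Lemma db_nabla_coalg_morph : is_coalg_morph C B _ _ (tens_coalg C B _ _ w w) w (db_nabla C B y).
Proof.
  have [[_ [lam_mu _]] _] := db_law C B y.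
  exact: coalg_of_lam_nabla_morph db_natural _ (db_alpha C B y) lam_mu.
Qed.

Lemma db_unit_coalg_morph : is_coalg_morph C B _ _ (mK B) w (db_unit C B y).
Proof. have [[_ [_ [lam_eta _]]] _] := db_law C B y. exact: coalg_of_lam_unit_morph. Qed.

Lemma db_Delta_coalg_morph : is_coalg_morph C B _ _ w (tens_coalg C B _ _ w w) (db_Delta C B y).
Proof.
  have [_ [lam_n_Delta _]] := db_law C B y. exact: coalg_of_lam_Delta_morph db_natural _ _.
Qed.

Lemma db_counit_coalg_morph : is_coalg_morph C B _ _ w (mK B) (db_counit C B y).
Proof. have [_ [_ lam_n_e]] := db_law C B y. exact: coalg_of_lam_counit_morph. Qed.

End CoalgebraOfDistBimonoid.

Definition coalg_of_dist_bimonoid (y : DistBimonoid B) : CoalgBimonoid B :=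
  {| cb_ob := db_ob C B y;
     cb_coalg := coalg_of_lam _ (db_lam C B y);
     cb_nabla := db_nabla C B y;
     cb_unit := db_unit C B y;
     cb_Delta := db_Delta C B y;
     cb_counit := db_counit C B y;
     cb_is_coalg := db_is_coalgebra y;
     cb_nabla_morph := db_nabla_coalg_morph y;
     cb_unit_morph := db_unit_coalg_morph y;
     cb_Delta_morph := db_Delta_coalg_morph y;
     cb_counit_morph := db_counit_coalg_morph y;
     cb_bimonoid := db_bimonoid C B y |}.

Lemma coalg_of_dist_of_coalg (x : CoalgBimonoid B) :
  coalg_of_dist_bimonoid (dist_of_coalg_bimonoid x) = x.
Proof.
  case: x => A w nabla u Delta e ? ? ? ? ? ?; rewrite /coalg_of_dist_bimonoid /=.
  move: (db_is_coalgebra _) (db_nabla_coalg_morph _) (db_unit_coalg_morph _)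
    (db_Delta_coalg_morph _) (db_counit_coalg_morph _).
  rewrite /= coalg_of_lam_of_coalg => q1 q2 q3 q4 q5.
  by congr Build_CoalgBimonoid; apply: proof_irrelevance.
Qed.

Lemma dist_of_coalg_of_dist (y : DistBimonoid B) :
  dist_of_coalg_bimonoid (coalg_of_dist_bimonoid y) = y.
Proof.
  case: y => A nabla u Delta e lam ? law compat; rewrite /dist_of_coalg_bimonoid /=.
  have lam_eq : lam_of_coalg A (coalg_of_lam A lam) = lam.
  { have [[lam_natural _] _] := law.
    exact: functional_extensionality_dep (lam_of_coalg_of_lam _ _ lam_natural compat). }
  move: (lam_of_coalg_law _ _ _ _ _) (lam_of_coalg_alpha _ _); rewrite lam_eq => q2 q3.
  by congr Build_DistBimonoid; apply: proof_irrelevance.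
Qed.

End Correspondence.

Theorem proposition5p7 (C : SMC) (B : SMComonad C) :
  exists (F : CoalgBimonoid B -> DistBimonoid B) (G : DistBimonoid B -> CoalgBimonoid B),
    (forall x : CoalgBimonoid B, G (F x) = x) /\
    (forall y : DistBimonoid B, F (G y) = y) /\
    (forall x : CoalgBimonoid B, db_underlying (F x) = cb_underlying x).
Proof.
  exists (dist_of_coalg_bimonoid C B), (coalg_of_dist_bimonoid C B).
  split; [exact: coalg_of_dist_of_coalg | split; [exact: dist_of_coalg_of_dist | by []]].
Qed.
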